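(* Let $G=(V,E)$ be a finite connected simple graph, let $m_0\colon V\to\mathbb{R}_{>0}$ be a vertex-weight and $d\colon E\to\mathbb{R}_{>0}$ a distance parameter, and set $M=\sum_{u\in V}m_0(u)$, $D^2=\sum_{uv\in E}d(uv)^2$. Let $m_1\colon E\to\mathbb{R}_{\ge 0}$ be an edge-weight such that the graph $(V,\{uv\in E: m_1(uv)>0\})$ is connected and $\sum_{uv\in E}m_1(uv)d(uv)^2=D^2$. Then $$\delta(G,m_0,d)\ \ge\ 1-\frac{D^2/M}{\lambda_1(G,(m_0,m_1))}.$$ Moreover, equality holds if and only if there exists a map $\varphi\colon V\to\mathbb{R}^{|V|}$ satisfying $\sum_{u\in V}m_0(u)\|\varphi(u)\|^2=M$ and $\|\varphi(u)-\varphi(v)\|\le d(uv)$ for all $uv\in E$, such that (i) $m_1(uv)\big(d(uv)^2-\|\varphi(u)-\varphi(v)\|^2\big)=0$ for all $uv\in E$, and (ii) $\Delta_{(m_0,m_1)}\varphi=\lambda_1(G,(m_0,m_1))\,(\varphi-\mathrm{bar}(\varphi))$, where $\Delta_{(m_0,m_1)}$ is applied componentwise (i.e. each component of $\varphi-\mathrm{bar}(\varphi)$ is an eigenvector of $\Delta_{(m_0,m_1)}$ for the eigenvalue $\lambda_1(G,(m_0,m_1))$).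
   Context: Edges are unordered pairs $uv=vu$; write $v\sim u$ if $uv\in E$. $\|\cdot\|$ is the Euclidean norm on $\mathbb{R}^{|V|}$. For $\varphi\colon V\to\mathbb{R}^{|V|}$, the affine barycenter is $\mathrm{bar}(\varphi)=\frac1M\sum_{u\in V}m_0(u)\varphi(u)$. Define $\delta(G,m_0,d)=\inf_\varphi\|\mathrm{bar}(\varphi)\|^2$, the infimum over all maps $\varphi\colon V\to\mathbb{R}^{|V|}$ with $\sum_{u\in V}m_0(u)\|\varphi(u)\|^2=M$ and $\|\varphi(u)-\varphi(v)\|\le d(uv)$ for all $uv\in E$. For an edge-weight $m_1\colon E\to\mathbb{R}_{\ge0}$, the Laplacian $\Delta_{(m_0,m_1)}$ acts on functions $f\colon V\to\mathbb{R}$ by $(\Delta_{(m_0,m_1)}f)(u)=\frac{1}{m_0(u)}\big[(\sum_{v\sim u}m_1(uv))f(u)-\sum_{v\sim u}m_1(uv)f(v)\big]$; it is symmetric and nonnegative for the inner product $\langle f_1,f_2\rangle=\sum_u m_0(u)f_1(u)f_2(u)$, and when $(V,\{uv: m_1(uv)>0\})$ is connected its kernel is the constants. $\lambda_1(G,(m_0,m_1))$ denotes its smallest positive eigenvalue, equivalently $\inf_f \frac{\sum_{uv\in E}m_1(uv)(f(u)-f(v))^2}{\sum_{u}m_0(u)(f(u)-\bar f)^2}$ over nonconstant $f$, with $\bar f=\frac1M\sum_u m_0(u)f(u)$. *)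

From mathcomp Require Import all_boot all_order all_algebra.
From mathcomp Require Import classical_sets reals.
Set Implicit Arguments. Unset Strict Implicit. Unset Printing Implicit Defensive.
Import Order.TTheory GRing.Theory Num.Theory.
Local Open Scope ring_scope.


Section Defs.
Variables (R : realType) (V : finType).

Definition simple_edges (E : {set {set V}}) : Prop :=
  forall e, e \in E -> #|e| = 2%N.

Definition adj (E : {set {set V}}) : rel V := fun u v => [set u; v] \in E.

Definition connected_graph (E : {set {set V}}) : Prop :=
  forall u v, connect (adj E) u v.

Definition support_connected (E : {set {set V}}) (m1 : {set V} -> R) : Prop :=
  forall u v, connect (fun x y => adj E x y && (0 < m1 [set x; y])) u v.

Definition mass (m0 : V -> R) : R := \sum_(u : V) m0 u.
Definition Dsq (E : {set {set V}}) (d : {set V} -> R) : R := \sum_(e in E) d e ^+ 2.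

Definition enorm (x : 'rV[R]_#|V|) : R := Num.sqrt (\sum_(i < #|V|) x 0 i ^+ 2).

Definition bar (m0 : V -> R) (phi : V -> 'rV[R]_#|V|) : 'rV[R]_#|V| :=
  (mass m0)^-1 *: \sum_(u : V) m0 u *: phi u.

Definition admissible (E : {set {set V}}) (m0 : V -> R) (d : {set V} -> R)
  (phi : V -> 'rV[R]_#|V|) : Prop :=
  \sum_(u : V) m0 u * enorm (phi u) ^+ 2 = mass m0 /\
  forall u v, [set u; v] \in E -> enorm (phi u - phi v) <= d [set u; v].

Definition delta (E : {set {set V}}) (m0 : V -> R) (d : {set V} -> R) : R :=
  inf [set x | exists phi, admissible E m0 d phi /\ x = enorm (bar m0 phi) ^+ 2]%classic.

Definition lap (E : {set {set V}}) (m0 : V -> R) (m1 : {set V} -> R)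
  (f : V -> R) (u : V) : R :=
  (m0 u)^-1 * ((\sum_(v | adj E u v) m1 [set u; v]) * f u
               - \sum_(v | adj E u v) m1 [set u; v] * f v).

Definition lambda1 (E : {set {set V}}) (m0 : V -> R) (m1 : {set V} -> R) : R :=
  inf [set l | 0 < l /\ exists f : V -> R, (exists u, f u != 0) /\
                 forall u, lap E m0 m1 f u = l * f u]%classic.

End Defs.

From Pilot Require Import Defs.
From mathcomp Require Import all_boot all_order all_algebra.
From mathcomp Require Import classical_sets reals.
From mathcomp Require Import boolp topology normedtype derive.
From mathcomp Require Import ring lra.
Set Implicit Arguments. Unset Strict Implicit. Unset Printing Implicit Defensive.
Import Order.TTheory GRing.Theory Num.Theory.
Import numFieldNormedType.Exports.
Local Open Scope ring_scope.

(* Let phi be admissible and psi_i = phi_i - bar(phi)_i its centred coordinates;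
   each psi_i has m0-mean zero and sum_i |psi_i|^2_m0 = M (1 - |bar phi|^2).
   The Rayleigh characterisation of lambda1 and Green's formula give
     lambda1 M (1 - |bar phi|^2) <= sum_i <psi_i, Delta psi_i>_m0
                                  = 1/2 sum_(u,v) m1(uv) |phi u - phi v|^2 <= D^2,
   the last step by the constraint |phi u - phi v| <= d(uv) and the hypothesis
   sum m1 d^2 = D^2.  Equality holds iff it holds in both steps, i.e. iff (i) and
   (ii) hold; for the first step this uses that a mean-zero function attaining
   the Rayleigh bound is an eigenfunction.  Both lambda1 and delta are attained
   (by compactness), which turns the pointwise statement into the one about delta.
   If V is a single vertex, lambda1 = inf set0 = 0 and, since x / 0 = 0, both
   sides equal 1. *)

Lemma quadratic_ge0_linear0 {R : realFieldType} (c b : R) :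
  (forall t, 0 <= t * c + t ^+ 2 * b) -> c = 0.
Proof.
move=> H; pose k := `|b| + 1.
have k_gt0 : 0 < k by rewrite ltr_pwDr // normr_ge0.
have bk : b - k < 0 by have := ler_norm b; rewrite /k; lra.
have := H (- c / k).
have -> : - c / k * c + (- c / k) ^+ 2 * b = c ^+ 2 * (b - k) / k ^+ 2.
  by field; rewrite gt_eqF.
rewrite pmulr_lge0 ?invr_gt0 ?exprn_gt0 // => h.
by apply/eqP; rewrite -sqrf_eq0 eq_le sqr_ge0 andbT; nra.
Qed.

Lemma abs_le_of_weighted_sqr {R : realFieldType} (a m S : R) :
  0 < m -> m * a ^+ 2 <= S -> `|a| <= 1 + S / m.
Proof.
move=> m_gt0 h; have a2S : a ^+ 2 <= S / m by rewrite ler_pdivlMr // mulrC.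
have := sqr_ge0 (`|a| - 1); have := normr_ge0 a.
by rewrite -(real_normK (num_real a)) in a2S; nra.
Qed.

Lemma ler_sum_term {R : numDomainType} {I : finType} (F : I -> R) i :
  (forall j, 0 <= F j) -> F i <= \sum_j F j.
Proof. by move=> F_ge0; rewrite (bigD1 i) //= lerDl sumr_ge0. Qed.

Lemma ler_sum_eq_iff {R : numDomainType} {I : finType} (F G : I -> R) :
  (forall i, F i <= G i) -> \sum_i F i = \sum_i G i <-> forall i, F i = G i.
Proof.
move=> FG; split => [|eqFG]; last exact: eq_bigr.
move/esym/eqP; rewrite -subr_eq0 -sumrB => /eqP sum0 i.
apply/eqP; rewrite eq_sym -subr_eq0; apply/eqP.
by apply: (psumr_eq0P _ sum0) => // j _; rewrite subr_ge0.
Qed.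

Lemma inf_attained {R : realType} (A : set R) x :
  A x -> lbound A x -> inf A = x.
Proof.
move=> Ax xlb; apply/le_anti; rewrite lb_le_inf //; last by exists x.
by rewrite ge_inf //; exists x.
Qed.

Lemma continuous_sumr {T : topologicalType} {R : realType} (I : finType)
    (P : pred I) (F : I -> T -> R) :
  (forall i, continuous (F i)) -> continuous (fun x => \sum_(i | P i) F i x).
Proof. by move=> F_cont; apply: continuous_big => //; exact: add_continuous. Qed.

Lemma continuous_mulr {T : topologicalType} {R : realType} (f g : T -> R) :
  continuous f -> continuous g -> continuous (fun x => f x * g x).
Proof. by move=> f_cont g_cont x; apply: continuousM; [exact: f_cont | exact: g_cont]. Qed.

Lemma continuous_subr {T : topologicalType} {R : realType} (f g : T -> R) :
  continuous f -> continuous g -> continuous (fun x => f x - g x).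
Proof. by move=> f_cont g_cont x; apply: continuousB; [exact: f_cont | exact: g_cont]. Qed.

Lemma rV_argmin {R : realType} {K : nat} (A : set 'rV[R]_K) (J : 'rV[R]_K -> R) C :
  (A !=set0)%classic -> closed A -> (forall x, A x -> forall k, `|x 0 k| <= C) ->
  continuous J -> exists2 x, A x & forall y, A y -> J x <= J y.
Proof.
move=> A0 A_closed A_bd J_cont.
have A_compact : compact A.
  have box_compact : compact
      [set v : 'rV[R]_K | forall i, `[(- C), C]%classic (v ord0 i)]%classic.
    apply: (@rV_compact _ _ (fun=> `[(- C), C]%classic)) => _.
    exact: segment_compact.
  apply: subclosed_compact A_closed box_compact _ => x /A_bd xC i.
  by rewrite /= in_itv /= -ler_norml.
have [x Ax xmin] := compact_EVT_min A0 A_compact (continuous_subspaceT J_cont).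
by exists x => [|y Ay]; [move: Ax; rewrite inE | apply: xmin; rewrite inE].
Qed.

Section Laplacian.
Variables (R : realType) (V : finType) (E : {set {set V}}).
Variables (m0 : V -> R) (m1 : {set V} -> R).
Hypothesis m0_gt0 : forall u, 0 < m0 u.
Hypothesis m1_ge0 : forall e, e \in E -> 0 <= m1 e.

Local Notation lap := (lap E m0 m1).

Definition eweight (u v : V) : R := if adj E u v then m1 [set u; v] else 0.

Definition wsum (f : V -> R) : R := \sum_u m0 u * f u.
Definition wdot (f g : V -> R) : R := \sum_u m0 u * (f u * g u).

Definition dirichlet (f g : V -> R) : R :=
  \sum_u \sum_v eweight u v * ((f u - f v) * (g u - g v)).

Definition energy (f : V -> R) : R := wdot f (lap f).

Definition rayleigh_lb (mu : R) : Prop :=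
  forall h, wsum h = 0 -> mu * wdot h h <= energy h.

Lemma adj_sym u v : adj E u v = adj E v u.
Proof. by rewrite /adj finset.setUC. Qed.

Lemma eweight_sym u v : eweight u v = eweight v u.
Proof. by rewrite /eweight adj_sym finset.setUC. Qed.

Lemma eweight_ge0 u v : 0 <= eweight u v.
Proof. by rewrite /eweight; case: ifP => // uv; apply: m1_ge0. Qed.

Lemma lapE f u : m0 u * lap f u = \sum_v eweight u v * (f u - f v).
Proof.
rewrite /lap mulrA mulfV ?gt_eqF // mul1r mulr_suml -sumrB big_mkcond /=.
by apply: eq_bigr => v _; rewrite /eweight; case: ifP; rewrite ?mul0r ?mulrBr.
Qed.

Lemma lap_shift f c u : lap (fun w => f w - c) u = lap f u.
Proof.
apply: (mulfI (lt0r_neq0 (m0_gt0 u))); rewrite !lapE.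
by apply: eq_bigr => v _; congr (_ * _); ring.
Qed.

Lemma lapD f g t u : lap (fun w => f w + t * g w) u = lap f u + t * lap g u.
Proof.
apply: (mulfI (lt0r_neq0 (m0_gt0 u))).
rewrite mulrDr [m0 u * (t * _)]mulrCA !lapE mulr_sumr -big_split.
by apply: eq_bigr => v _ /=; ring.
Qed.

Lemma mass_gt0 : (0 < #|V|)%N -> 0 < mass m0.
Proof.
move=> /card_gt0P [u _].
exact: lt_le_trans (m0_gt0 u) (ler_sum_term _ (fun v => ltW (m0_gt0 v))).
Qed.

Lemma wsum_lincomb f g t : wsum (fun u => f u + t * g u) = wsum f + t * wsum g.
Proof. by rewrite /wsum mulr_sumr -big_split; apply: eq_bigr => u _ /=; ring. Qed.

Lemma wsumZ c f : wsum (fun u => c * f u) = c * wsum f.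
Proof. by rewrite /wsum mulr_sumr; apply: eq_bigr => u _; ring. Qed.

Lemma wsum_const f c : (forall u, f u = c) -> wsum f = c * mass m0.
Proof.
by move=> fc; rewrite /wsum /mass mulr_sumr; apply: eq_bigr => u _; rewrite fc mulrC.
Qed.

Lemma wdot_lincomb f g t :
  wdot (fun u => f u + t * g u) (fun u => f u + t * g u)
  = wdot f f + 2 * t * wdot g f + t ^+ 2 * wdot g g.
Proof. by rewrite /wdot !mulr_sumr -!big_split; apply: eq_bigr => u _ /=; ring. Qed.

Lemma wdotZ c f : wdot (fun u => c * f u) (fun u => c * f u) = c ^+ 2 * wdot f f.
Proof. by rewrite /wdot mulr_sumr; apply: eq_bigr => u _; ring. Qed.

Lemma wdot_ge0 f : 0 <= wdot f f.
Proof. by apply: sumr_ge0 => u _; apply: mulr_ge0; [exact: ltW | exact: sqr_ge0]. Qed.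

Lemma wdot_eq0 f : wdot f f = 0 -> forall u, f u = 0.
Proof.
move=> f0 u; have term_ge0 w : 0 <= m0 w * (f w * f w).
  by apply: mulr_ge0; [exact: ltW | exact: sqr_ge0].
have /eqP := psumr_eq0P (fun w _ => term_ge0 w) f0 (i := u) isT.
by rewrite mulf_eq0 gt_eqF //= mulf_eq0 orbb => /eqP.
Qed.

Lemma wdot_gt0 f u : f u != 0 -> 0 < wdot f f.
Proof. by move=> fu; rewrite lt_def wdot_ge0 andbT; apply: contra fu => /eqP/wdot_eq0->. Qed.

Lemma dirichletC f g : dirichlet f g = dirichlet g f.
Proof. by apply: eq_bigr => u _; apply: eq_bigr => v _; rewrite [_ * (_ - _)]mulrC. Qed.

(* Green's formula: the factor 2 is because every edge is seen from both ends. *)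
Lemma lap_green f g : 2 * wdot g (lap f) = dirichlet g f.
Proof.
have -> : wdot g (lap f) = \sum_u \sum_v eweight u v * (g u * (f u - f v)).
  apply: eq_bigr => u _; rewrite mulrCA lapE mulr_sumr.
  by apply: eq_bigr => v _; ring.
rewrite mulr2n mulrDl mul1r {2}exchange_big -big_split; apply: eq_bigr => u _.
by rewrite -big_split; apply: eq_bigr => v _ /=; rewrite eweight_sym; ring.
Qed.

Lemma wdot_lapC f g : wdot f (lap g) = wdot g (lap f).
Proof. by apply: (@mulfI _ 2); rewrite ?pnatr_eq0 // !lap_green dirichletC. Qed.

Lemma wsum_lap f : wsum (lap f) = 0.
Proof.
have := lap_green f (fun=> 1); rewrite /dirichlet.
rewrite big1 => [/eqP|u _]; last by rewrite big1 // => v _; rewrite subrr mul0r mulr0.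
rewrite mulf_eq0 pnatr_eq0 /= => /eqP <-.
by apply: eq_bigr => u _; rewrite mul1r.
Qed.

Lemma energy_dirichlet f : 2 * energy f = dirichlet f f.
Proof. exact: lap_green. Qed.

Lemma energy_ge0 f : 0 <= energy f.
Proof.
rewrite -(@pmulr_rge0 _ 2) // energy_dirichlet.
apply: sumr_ge0 => u _; apply: sumr_ge0 => v _.
by apply: mulr_ge0; [exact: eweight_ge0 | exact: sqr_ge0].
Qed.

Lemma energyZ c f : energy (fun u => c * f u) = c ^+ 2 * energy f.
Proof.
apply: (@mulfI _ 2); first by rewrite pnatr_eq0.
rewrite mulrCA !energy_dirichlet mulr_sumr; apply: eq_bigr => u _.
by rewrite mulr_sumr; apply: eq_bigr => v _; ring.
Qed.

Lemma energy_lincomb f g t :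
  energy (fun u => f u + t * g u)
  = energy f + 2 * t * wdot g (lap f) + t ^+ 2 * energy g.
Proof.
have -> : energy (fun u => f u + t * g u) = wdot f (lap f) + t * wdot f (lap g)
    + t * wdot g (lap f) + t ^+ 2 * wdot g (lap g).
  rewrite /energy /wdot !mulr_sumr -!big_split; apply: eq_bigr => u _ /=.
  by rewrite lapD; ring.
by rewrite (wdot_lapC f g) /energy; ring.
Qed.

Lemma eigen_wsum0 l f : l != 0 -> (forall u, lap f u = l * f u) -> wsum f = 0.
Proof.
move=> l_neq0 eig; apply: (mulfI l_neq0); rewrite mulr0 -(wsum_lap f) mulr_sumr.
by apply: eq_bigr => u _; rewrite eig; ring.
Qed.

Lemma eigen_energy l f : (forall u, lap f u = l * f u) -> energy f = l * wdot f f.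
Proof.
by move=> eig; rewrite /energy /wdot mulr_sumr; apply: eq_bigr => u _; rewrite eig; ring.
Qed.

(* The first variation of [energy - mu * wdot] at [g] vanishes in every
   mean-zero direction, and [lap g - mu * g] is itself such a direction. *)
Lemma rayleigh_eq_eigen mu g : rayleigh_lb mu -> wsum g = 0 ->
  energy g = mu * wdot g g -> forall u, lap g u = mu * g u.
Proof.
move=> mu_lb g0 g_eq; pose w u := lap g u - mu * g u.
have w_orth h : wsum h = 0 -> wdot h w = 0.
  move=> h0; have wE : wdot h w = wdot h (lap g) - mu * wdot h g.
    by rewrite /wdot mulr_sumr -sumrB; apply: eq_bigr => u _; rewrite /w; ring.
  suff /eqP : 2 * wdot h w = 0 by rewrite mulf_eq0 pnatr_eq0 => /eqP.
  apply: (@quadratic_ge0_linear0 _ _ (energy h - mu * wdot h h)) => t.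
  have gth0 : wsum (fun u => g u + t * h u) = 0.
    by rewrite wsum_lincomb g0 h0 mulr0 addr0.
  have := mu_lb _ gth0.
  by rewrite energy_lincomb wdot_lincomb g_eq wE; lra.
have w0 : wsum w = 0.
  have -> : wsum w = wsum (lap g) - mu * wsum g.
    by rewrite /wsum mulr_sumr -sumrB; apply: eq_bigr => u _; rewrite /w; ring.
  by rewrite wsum_lap g0 mulr0 subr0.
by move=> u; apply/eqP; rewrite -subr_eq0; apply/eqP; exact: wdot_eq0 (w_orth w w0) u.
Qed.

Lemma sum_rayleigh_bound (I : finType) mu (f : I -> V -> R) :
  rayleigh_lb mu -> (forall i, wsum (f i) = 0) ->
  mu * \sum_i wdot (f i) (f i) <= \sum_i energy (f i) /\
  (mu * \sum_i wdot (f i) (f i) = \sum_i energy (f i) <->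
   forall i u, lap (f i) u = mu * f i u).
Proof.
move=> mu_lb f_mean0; rewrite mulr_sumr.
have f_le i : mu * wdot (f i) (f i) <= energy (f i) := mu_lb _ (f_mean0 i).
split; first exact: ler_sum.
rewrite (ler_sum_eq_iff f_le); split=> [f_eq i | f_eig i].
  exact: rayleigh_eq_eigen (f_mean0 i) (esym (f_eq i)).
by rewrite (eigen_energy (f_eig i)).
Qed.

Lemma mean0_witness (a b : V) : a != b -> exists2 h, wsum h = 0 & h a != 0.
Proof.
move=> ab; exists (fun u => if u == a then (m0 a)^-1 else if u == b then - (m0 b)^-1 else 0).
  rewrite /wsum (bigD1 a) //= (bigD1 b) /= 1?eq_sym //.
  rewrite big1 => [|u /andP [/negbTE-> /negbTE->]]; last by rewrite mulr0.
  by rewrite eqxx eq_sym (negbTE ab) eqxx mulrN !mulfV ?gt_eqF // addr0 subrr.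
by rewrite eqxx invr_eq0 gt_eqF.
Qed.

Lemma single_mean0 f u : (forall v w : V, v = w) -> wsum f = 0 -> f u = 0.
Proof.
move=> single; have M_gt0 : 0 < mass m0 by apply: mass_gt0; apply/card_gt0P; exists u.
rewrite (wsum_const (fun w => congr1 f (single w u))) => /eqP.
by rewrite mulf_eq0 (gt_eqF M_gt0) orbF => /eqP.
Qed.

Definition rv_fun (x : 'rV[R]_#|V|) : V -> R := fun u => x 0 (enum_rank u).
Definition fun_rv (h : V -> R) : 'rV[R]_#|V| := \row_k h (enum_val k).

Lemma fun_rvK h : rv_fun (fun_rv h) = h.
Proof. by apply/funext => u; rewrite /rv_fun /fun_rv mxE enum_rankK. Qed.

Lemma continuous_lap {T : topologicalType} (f : T -> V -> R) :
  (forall u, continuous (f^~ u)) -> forall u, continuous (fun x => lap (f x) u).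
Proof.
move=> f_cont u; apply: continuous_mulr; first exact: cst_continuous.
apply: continuous_subr; first apply: continuous_mulr; last apply: continuous_sumr => v.
- exact: cst_continuous.
- exact: f_cont.
- by apply: continuous_mulr; [exact: cst_continuous | exact: f_cont].
Qed.

Lemma continuous_wdot {T : topologicalType} (f g : T -> V -> R) :
  (forall u, continuous (f^~ u)) -> (forall u, continuous (g^~ u)) ->
  continuous (fun x => wdot (f x) (g x)).
Proof.
move=> f_cont g_cont; apply: continuous_sumr => u.
apply: continuous_mulr; first exact: cst_continuous.
by apply: continuous_mulr; [exact: f_cont | exact: g_cont].
Qed.

Lemma rayleigh_minimizer (a b : V) : a != b ->
  exists g, [/\ wsum g = 0, wdot g g = 1 & rayleigh_lb (energy g)].
Proof.
move=> ab; have [h0 h0_mean0 h0a] := mean0_witness ab.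
have rv_cont u : continuous (rv_fun^~ u) by move=> x; exact: coord_continuous.
pose wsum_rv x := wsum (rv_fun x); pose wdot_rv x := wdot (rv_fun x) (rv_fun x).
pose A := (wsum_rv @^-1` [set 0] `&` wdot_rv @^-1` [set 1])%classic.
pose normalize h := fun_rv (fun u => (Num.sqrt (wdot h h))^-1 * h u).
have normalizeA h : wsum h = 0 -> 0 < wdot h h -> A (normalize h).
  move=> h_mean0 h_gt0; rewrite /A /normalize /wsum_rv /wdot_rv /= fun_rvK wsumZ wdotZ.
  by rewrite h_mean0 mulr0 exprVn (sqr_sqrtr (ltW h_gt0)) mulVf ?gt_eqF.
have A_closed : closed A.
  apply: closedI; apply: preimage_closed => [x _|]; try exact: closed_eq.
    apply: continuous_sumr => u; apply: continuous_mulr; last exact: rv_cont.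
    exact: cst_continuous.
  exact: continuous_wdot.
have A_bd x : A x -> forall k, `|x 0 k| <= 1 + \sum_u 1 / m0 u.
  move=> [_ Ax1] k; have -> : x 0 k = rv_fun x (enum_val k) by rewrite /rv_fun enum_valK.
  have term_le1 : m0 (enum_val k) * rv_fun x (enum_val k) ^+ 2 <= 1.
    rewrite -Ax1 /wdot_rv /wdot expr2.
    apply: (@ler_sum_term _ _ (fun u => m0 u * (rv_fun x u * rv_fun x u))) => u.
    by apply: mulr_ge0; [exact: ltW | exact: sqr_ge0].
  apply: le_trans (abs_le_of_weighted_sqr (m0_gt0 _) term_le1) _.
  rewrite lerD2l; apply: (@ler_sum_term _ _ (fun u => 1 / m0 u)) => u.
  by rewrite divr_ge0 ?ltW.
have J_cont : continuous (fun x => energy (rv_fun x)).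
  by apply: continuous_wdot => //; exact: continuous_lap.
have [xg [/= g_mean0 g_norm1] xg_min] :=
  rV_argmin (ex_intro _ _ (normalizeA h0 h0_mean0 (wdot_gt0 h0a))) A_closed A_bd J_cont.
exists (rv_fun xg); split=> // h h_mean0.
have [h_eq0|h_neq0] := eqVneq (wdot h h) 0; first by rewrite h_eq0 mulr0 energy_ge0.
have h_gt0 : 0 < wdot h h by rewrite lt_def h_neq0 wdot_ge0.
have := xg_min _ (normalizeA h h_mean0 h_gt0).
rewrite /normalize fun_rvK energyZ exprVn (sqr_sqrtr (ltW h_gt0)) => min_h.
by rewrite -(ler_pdivlMr _ _ h_gt0) mulrC.
Qed.

Lemma energy_eq0_const g : support_connected E m1 -> energy g = 0 ->
  forall u v, g u = g v.
Proof.
move=> supp g0 u v.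
have edge_term0 x y : eweight x y * ((g x - g y) * (g x - g y)) = 0.
  have term_ge0 (p : V * V) :
      0 <= eweight p.1 p.2 * ((g p.1 - g p.2) * (g p.1 - g p.2)).
    by apply: mulr_ge0; [exact: eweight_ge0 | exact: sqr_ge0].
  have dir0 : dirichlet g g = 0 by rewrite -energy_dirichlet g0 mulr0.
  rewrite /dirichlet pair_bigA /= in dir0.
  exact: (psumr_eq0P (fun p _ => term_ge0 p) dir0 (i := (x, y))).
suff : u \in [pred w | g w == g v] by move/eqP.
rewrite (closed_connect _ (supp u v)) ?inE // => x y /andP [xy m1xy] /=.
have := edge_term0 x y; rewrite /eweight xy => /eqP.
by rewrite mulf_eq0 gt_eqF //= mulf_eq0 orbb subr_eq0 !inE => /eqP ->.
Qed.

Lemma lambda1_rayleigh (a b : V) : a != b -> support_connected E m1 ->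
  0 < lambda1 E m0 m1 /\ rayleigh_lb (lambda1 E m0 m1).
Proof.
move=> ab supp; have [g [g_mean0 g_norm1 g_min]] := rayleigh_minimizer ab.
have [u g_u] : exists u, g u != 0.
  apply/existsP; apply: contraT; rewrite negb_exists => /forallP g0.
  move: g_norm1; rewrite /wdot big1 => [/esym/eqP|w _]; first by rewrite oner_eq0.
  by rewrite (eqP (negbNE (g0 w))) mul0r mulr0.
have g_attains : energy g = energy g * wdot g g by rewrite g_norm1 mulr1.
have g_eig := rayleigh_eq_eigen g_min g_mean0 g_attains.
have g_pos : 0 < energy g.
  rewrite lt_def energy_ge0 andbT; apply: contra g_u.
  move=> /eqP/(energy_eq0_const supp) g_const.
  have M_gt0 : 0 < mass m0 by apply: mass_gt0; apply/card_gt0P; exists u.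
  have := g_mean0; rewrite (wsum_const (fun w => g_const w u)) => /eqP.
  by rewrite mulf_eq0 (gt_eqF M_gt0) orbF.
suff -> : lambda1 E m0 m1 = energy g by [].
apply: inf_attained => [|l [l_gt0 [f [[w f_w] f_eig]]]].
  by split=> //; exists g; split=> //; exists u.
have := g_min f (eigen_wsum0 (lt0r_neq0 l_gt0) f_eig).
by rewrite (eigen_energy f_eig) ler_pM2r // (wdot_gt0 f_w).
Qed.

Lemma lambda1_single : (forall u v : V, u = v) -> lambda1 E m0 m1 = 0.
Proof.
move=> single; rewrite /lambda1 -[RHS]inf0; congr inf.
apply/seteqP; split=> l // [l_gt0 [f [[u f_u] f_eig]]].
by rewrite (single_mean0 u single (eigen_wsum0 (lt0r_neq0 l_gt0) f_eig)) eqxx in f_u.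
Qed.

End Laplacian.

Section Embedding.
Variables (R : realType) (V : finType) (E : {set {set V}}).
Variables (m0 : V -> R) (d m1 : {set V} -> R).
Hypothesis m0_gt0 : forall u, 0 < m0 u.
Hypothesis m1_ge0 : forall e, e \in E -> 0 <= m1 e.
Hypothesis simpleE : simple_edges E.

Local Notation vec := 'rV[R]_#|V|.

Definition centered (phi : V -> vec) i u : R := phi u 0 i - bar m0 phi 0 i.

Definition map_energy (phi : V -> vec) : R :=
  \sum_u \sum_v eweight E m1 u v * enorm (phi u - phi v) ^+ 2.

Definition delta_bound (mu : R) : R :=
  1 - (\sum_(e in E) m1 e * d e ^+ 2) / mass m0 / mu.

Definition tight_edges (phi : V -> vec) : Prop :=
  forall u v, [set u; v] \in E ->
    m1 [set u; v] * (d [set u; v] ^+ 2 - enorm (phi u - phi v) ^+ 2) = 0.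

Definition eigen_coords (mu : R) (phi : V -> vec) : Prop :=
  forall i u, lap E m0 m1 (fun w => phi w 0 i) u = mu * (phi u 0 i - bar m0 phi 0 i).

Lemma enorm2 (x : vec) : enorm x ^+ 2 = \sum_i x 0 i ^+ 2.
Proof. by rewrite sqr_sqrtr // sumr_ge0 // => i _; exact: sqr_ge0. Qed.

Lemma enorm_ge0 (x : vec) : 0 <= enorm x.
Proof. exact: sqrtr_ge0. Qed.

Lemma barE (phi : V -> vec) i :
  bar m0 phi 0 i = (mass m0)^-1 * wsum m0 (fun u => phi u 0 i).
Proof. by rewrite /bar mxE summxE; congr (_ * _); apply: eq_bigr => u _; rewrite mxE. Qed.

Lemma wsum_centered phi i : 0 < mass m0 -> wsum m0 (centered phi i) = 0.
Proof.
move=> M_gt0; have -> : wsum m0 (centered phi i)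
    = wsum m0 (fun u => phi u 0 i) - bar m0 phi 0 i * mass m0.
  by rewrite /wsum /mass mulr_sumr -sumrB; apply: eq_bigr => u _; rewrite /centered; ring.
by rewrite barE; field; rewrite gt_eqF.
Qed.

Lemma sum_wdot_centered phi : 0 < mass m0 ->
  \sum_i wdot m0 (centered phi i) (centered phi i)
  = \sum_u m0 u * enorm (phi u) ^+ 2 - mass m0 * enorm (bar m0 phi) ^+ 2.
Proof.
move=> M_gt0.
have centered_i i : wdot m0 (centered phi i) (centered phi i)
    = \sum_u m0 u * phi u 0 i ^+ 2 - mass m0 * bar m0 phi 0 i ^+ 2.
  have sum_i : wsum m0 (fun u => phi u 0 i) = bar m0 phi 0 i * mass m0.
    by rewrite barE; field; rewrite gt_eqF.
  have -> : wdot m0 (centered phi i) (centered phi i) = \sum_u m0 u * phi u 0 i ^+ 2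
      - 2 * bar m0 phi 0 i * wsum m0 (fun u => phi u 0 i)
      + bar m0 phi 0 i ^+ 2 * mass m0.
    rewrite /wdot /wsum /mass /centered !mulr_sumr -sumrB -big_split /=.
    by apply: eq_bigr => u _; ring.
  by rewrite sum_i; ring.
rewrite (eq_bigr _ (fun i _ => centered_i i)) sumrB exchange_big /= enorm2 mulr_sumr.
by congr (_ - _); apply: eq_bigr => u _; rewrite enorm2 mulr_sumr.
Qed.

Lemma sum_energy_centered phi :
  2 * \sum_i energy E m0 m1 (centered phi i) = map_energy phi.
Proof.
rewrite mulr_sumr (eq_bigr _ (fun i _ => energy_dirichlet E m1 m0_gt0 _)).
rewrite /dirichlet /map_energy exchange_big; apply: eq_bigr => u _; rewrite exchange_big.
apply: eq_bigr => v _; rewrite enorm2 mulr_sumr; apply: eq_bigr => i _.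
by rewrite !mxE /centered; ring.
Qed.

Lemma set2_eq (a b u v : V) : a != b ->
  ([set u; v] == [set a; b]) = ((u, v) == (a, b)) || ((u, v) == (b, a)).
Proof.
move=> ab; apply/eqP/idP => [uv_ab | /orP [] /eqP [-> ->] //]; last exact: finset.setUC.
have : [set u; v] \subset [set a; b] /\ [set a; b] \subset [set u; v] by rewrite uv_ab.
rewrite !finset.subUset !finset.sub1set !inE => -[/andP [ua vb] /andP [au bu]].
move: ua vb au bu; rewrite !xpair_eqE.
by do 2 case/orP => /eqP->; rewrite ?eqxx ?(negbTE ab) ?(eq_sym b a) ?(negbTE ab) ?orbT.
Qed.

Lemma sum_adj_pairs (G : {set V} -> R) :
  \sum_u \sum_v (if adj E u v then G [set u; v] else 0) = 2 * \sum_(e in E) G e.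
Proof.
rewrite pair_bigA /= -big_mkcond /=.
rewrite (partition_big (fun p => [set p.1; p.2]) (mem E)) // mulr_sumr.
apply: eq_bigr => e eE; have /cards2P [a [b [ab def_e]]] : #|e| == 2%N by rewrite simpleE.
rewrite (eq_bigr (fun=> G e)) => [|p /andP [_ /eqP ->]] //.
rewrite sumr_const (eq_card (B := pred2 (a, b) (b, a))) => [|[u v]].
  have ab_ba : (a, b) != (b, a) by rewrite xpair_eqE negb_and ab.
  by rewrite card2 ab_ba mulr_natl.
rewrite !inE /adj def_e -set2_eq // unfold_in /=.
by case: eqP => [->|_]; rewrite ?andbF // -def_e andbT.
Qed.

Lemma map_energy_bound phi : admissible E m0 d phi ->
  map_energy phi <= 2 * \sum_(e in E) m1 e * d e ^+ 2 /\
  (map_energy phi = 2 * \sum_(e in E) m1 e * d e ^+ 2 <-> tight_edges phi).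
Proof.
move=> [_ phi_lip].
pose cap u v := if adj E u v then m1 [set u; v] * d [set u; v] ^+ 2 else 0.
have term_le (p : V * V) :
    eweight E m1 p.1 p.2 * enorm (phi p.1 - phi p.2) ^+ 2 <= cap p.1 p.2.
  rewrite /eweight /cap; case: ifP => [uv|]; last by rewrite mul0r.
  apply: ler_wpM2l; first exact: m1_ge0.
  by have := phi_lip _ _ uv; have := enorm_ge0 (phi p.1 - phi p.2); nra.
rewrite -(sum_adj_pairs (fun e => m1 e * d e ^+ 2)) /map_energy !pair_bigA /=.
split; first exact: ler_sum.
rewrite (ler_sum_eq_iff term_le); split=> [eq_uv u v uv | eq_uv [u v]].
  by have := eq_uv (u, v); rewrite /eweight /cap /adj uv /= mulrBr => ->; rewrite subrr.
rewrite /eweight /cap /=; case: ifP => [uv|]; last by rewrite mul0r.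
by apply/eqP; rewrite eq_sym -subr_eq0 -mulrBr eq_uv.
Qed.

Lemma bar_bound mu phi : 0 < mu -> rayleigh_lb E m0 m1 mu -> 0 < mass m0 ->
  admissible E m0 d phi ->
  delta_bound mu <= enorm (bar m0 phi) ^+ 2 /\
  (enorm (bar m0 phi) ^+ 2 = delta_bound mu <-> tight_edges phi /\ eigen_coords mu phi).
Proof.
move=> mu_gt0 mu_lb M_gt0 [phi_norm phi_lip].
set D := \sum_(e in E) m1 e * d e ^+ 2; set b := enorm (bar m0 phi) ^+ 2.
set Q := \sum_i energy E m0 m1 (centered phi i).
have spread : \sum_i wdot m0 (centered phi i) (centered phi i) = mass m0 * (1 - b).
  by rewrite sum_wdot_centered // phi_norm mulrBr mulr1.
have [rayl_le rayl_eq] :=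
  sum_rayleigh_bound m0_gt0 mu_lb (fun i => wsum_centered phi i M_gt0).
have [edge_le edge_eq] := map_energy_bound (conj phi_norm phi_lip).
rewrite spread -/Q in rayl_le rayl_eq.
rewrite -sum_energy_centered -/Q -/D in edge_le edge_eq.
have boundE : delta_bound mu = b + (mu * (mass m0 * (1 - b)) - D) / (mass m0 * mu).
  by rewrite /delta_bound -/D; field; rewrite !gt_eqF.
have frac_le0 : (mu * (mass m0 * (1 - b)) - D) / (mass m0 * mu) <= 0.
  by rewrite pmulr_lle0 ?invr_gt0 ?mulr_gt0 // subr_le0; lra.
split; first by rewrite boundE; lra.
have frac_eq0 : b = b + (mu * (mass m0 * (1 - b)) - D) / (mass m0 * mu) <->
    mu * (mass m0 * (1 - b)) = D.
  split=> [/eqP|->]; last by rewrite subrr mul0r addr0.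
  rewrite eq_sym -subr_eq0 [b + _]addrC addrK mulf_eq0 invr_eq0 mulf_eq0.
  by rewrite (gt_eqF M_gt0) (gt_eqF mu_gt0) !orbF subr_eq0 => /eqP.
have eigen_iff : (forall i u, lap E m0 m1 (centered phi i) u = mu * centered phi i u)
    <-> eigen_coords mu phi.
  by split=> eig i u; have := eig i u; rewrite lap_shift.
rewrite -eigen_iff -rayl_eq -edge_eq boundE frac_eq0.
by split=> [sD | [QD sQ]]; [split|]; lra.
Qed.

Lemma bar_bound_lambda1 phi : (0 < #|V|)%N -> support_connected E m1 ->
  admissible E m0 d phi ->
  delta_bound (lambda1 E m0 m1) <= enorm (bar m0 phi) ^+ 2 /\
  (enorm (bar m0 phi) ^+ 2 = delta_bound (lambda1 E m0 m1) <->
   tight_edges phi /\ eigen_coords (lambda1 E m0 m1) phi).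
Proof.
move=> V_gt0 supp adm; have M_gt0 := mass_gt0 m0_gt0 V_gt0.
have [[a [b ab]] | not_two] := pselect (exists a b : V, a != b).
  have [lam_gt0 lam_lb] := lambda1_rayleigh m0_gt0 m1_ge0 ab supp.
  exact: bar_bound.
have single (u v : V) : u = v.
  by have [//|uv] := eqVneq u v; case: not_two; exists u, v.
have no_adj u v : adj E u v = false.
  by rewrite /adj (single v u) finset.setUid; apply/negP => /simpleE; rewrite cards1.
have b1 : enorm (bar m0 phi) ^+ 2 = 1.
  have := sum_wdot_centered phi M_gt0; rewrite (proj1 adm) big1 => [/esym/eqP|i _].
    by rewrite subr_eq0 -{1}[mass m0]mulr1 => /eqP/(mulfI (lt0r_neq0 M_gt0)).
  rewrite /wdot big1 // => u _.
  by rewrite (single_mean0 m0_gt0 u single (wsum_centered phi i M_gt0)) !mul0r mulr0.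
rewrite /delta_bound (lambda1_single E m1 m0_gt0 single) invr0 mulr0 subr0 b1.
split=> //; split=> // _; split=> [u v uvE | i u].
  by have := no_adj u v; rewrite /adj uvE.
by rewrite mul0r /Defs.lap !big_pred0 // mul0r subrr mulr0.
Qed.

End Embedding.

Section Delta.
Variables (R : realType) (V : finType) (E : {set {set V}}).
Variables (m0 : V -> R) (d : {set V} -> R).
Hypothesis m0_gt0 : forall u, 0 < m0 u.
Hypothesis d_gt0 : forall e, e \in E -> 0 < d e.
Hypothesis V_gt0 : (0 < #|V|)%N.

Local Notation vec := 'rV[R]_#|V|.

Lemma delta_le phi : admissible E m0 d phi -> delta E m0 d <= enorm (bar m0 phi) ^+ 2.
Proof.
move=> adm; apply: ge_inf; last by exists phi.
by exists 0 => _ [psi [_ ->]]; exact: sqr_ge0.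
Qed.

Lemma delta_ge c : (exists phi, admissible E m0 d phi) ->
  (forall phi, admissible E m0 d phi -> c <= enorm (bar m0 phi) ^+ 2) ->
  c <= delta E m0 d.
Proof.
move=> [phi adm] c_lb; apply: lb_le_inf; first by exists (enorm (bar m0 phi) ^+ 2), phi.
by move=> _ [psi [adm_psi ->]]; exact: c_lb.
Qed.

Lemma admissible_exists : exists phi, admissible E m0 d phi.
Proof.
pose i0 : 'I_#|V| := Ordinal V_gt0.
exists (fun _ => \row_i (i == i0)%:R); split => [|u v uv].
  apply: eq_bigr => u _; rewrite enorm2 (bigD1 i0) //= big1 => [|i /negbTE i_i0].
    by rewrite mxE eqxx expr1n addr0 mulr1.
  by rewrite mxE i_i0 expr0n.
by rewrite subrr /enorm big1 ?sqrtr0 ?ltW ?d_gt0 // => i _; rewrite mxE expr0n.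
Qed.

Definition rv_map (x : 'rV[R]_(#|V| * #|V|)) (u : V) : vec :=
  \row_i x 0 (mxvec_index (enum_rank u) i).
Definition map_rv (phi : V -> vec) : 'rV[R]_(#|V| * #|V|) :=
  mxvec (\matrix_(j, i) phi (enum_val j) 0 i).

Lemma map_rvK phi : rv_map (map_rv phi) = phi.
Proof. by apply/funext => u; apply/rowP => i; rewrite !mxE mxvecE mxE enum_rankK. Qed.

Lemma continuous_enorm2 {T : topologicalType} (F : T -> vec) :
  (forall i, continuous (fun x => F x 0 i)) -> continuous (fun x => enorm (F x) ^+ 2).
Proof.
move=> F_cont; rewrite (_ : (fun x => _) = fun x => \sum_i F x 0 i * F x 0 i).
  by apply: continuous_sumr => i; exact: continuous_mulr.
by apply/funext => x; rewrite enorm2.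
Qed.

Lemma continuous_rv_map u i : continuous (fun x => rv_map x u 0 i).
Proof.
rewrite (_ : (fun x => _) =
    fun x : 'rV[R]_(#|V| * #|V|) => x 0 (mxvec_index (enum_rank u) i)).
  by move=> x; exact: coord_continuous.
by apply/funext => x; rewrite mxE.
Qed.

Lemma admissible_closed : closed [set x | admissible E m0 d (rv_map x)]%classic.
Proof.
pose norm_rv x := \sum_u m0 u * enorm (rv_map x u) ^+ 2.
pose gap (p : V * V) x := if adj E p.1 p.2
  then enorm (rv_map x p.1 - rv_map x p.2) ^+ 2 - d [set p.1; p.2] ^+ 2 else 0.
have -> : [set x | admissible E m0 d (rv_map x)]%classic = (norm_rv @^-1` [set mass m0]
    `&` \bigcap_(p in setT) (gap p @^-1` [set y | y <= 0]))%classic.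
  apply/seteqP; split=> x /= [norm_x lip_x]; split=> //.
    move=> [u v] _; rewrite /gap /=; case: ifP => // uv; rewrite subr_le0.
    by rewrite ler_sqr ?nnegrE ?enorm_ge0 ?(ltW (d_gt0 uv)) //; exact: lip_x.
  move=> u v uv; have := lip_x (u, v) I; rewrite /gap /= (uv : adj E u v) subr_le0.
  by rewrite ler_sqr ?nnegrE ?enorm_ge0 ?(ltW (d_gt0 uv)).
apply: closedI.
  apply: preimage_closed => [x _|]; last exact: closed_eq.
  apply: continuous_sumr => u; apply: continuous_mulr; first exact: cst_continuous.
  by apply: continuous_enorm2; exact: continuous_rv_map.
apply: closed_bigI => p _; apply: preimage_closed => [x _|]; last exact: closed_le.
rewrite /gap; case: (adj E p.1 p.2); last exact: cst_continuous.
apply: continuous_subr; last exact: cst_continuous.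
apply: continuous_enorm2 => i.
rewrite (_ : (fun x => _) = fun x => rv_map x p.1 0 i - rv_map x p.2 0 i).
  by apply: continuous_subr; exact: continuous_rv_map.
by apply/funext => y; rewrite !mxE.
Qed.

Lemma admissible_bounded x : admissible E m0 d (rv_map x) ->
  forall k, `|x 0 k| <= 1 + \sum_u mass m0 / m0 u.
Proof.
move=> [norm_x _] k; case/mxvec_indexP: k => j i; set u := enum_val j.
have -> : x 0 (mxvec_index j i) = rv_map x u 0 i by rewrite mxE enum_valK.
have coord_le : m0 u * rv_map x u 0 i ^+ 2 <= mass m0.
  have coord_enorm : rv_map x u 0 i ^+ 2 <= enorm (rv_map x u) ^+ 2.
    rewrite enorm2; apply: (@ler_sum_term _ _ (fun k => rv_map x u 0 k ^+ 2)).
    by move=> k; exact: sqr_ge0.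
  rewrite -norm_x; apply: le_trans (ler_wpM2l (ltW (m0_gt0 u)) coord_enorm) _.
  apply: (@ler_sum_term _ _ (fun v => m0 v * enorm (rv_map x v) ^+ 2)) => v.
  by apply: mulr_ge0; [exact: ltW | exact: sqr_ge0].
apply: le_trans (abs_le_of_weighted_sqr (m0_gt0 u) coord_le) _.
rewrite lerD2l; apply: (@ler_sum_term _ _ (fun v => mass m0 / m0 v)) => v.
by rewrite divr_ge0 ?ltW ?mass_gt0.
Qed.

Lemma delta_attained :
  exists2 phi, admissible E m0 d phi & delta E m0 d = enorm (bar m0 phi) ^+ 2.
Proof.
have J_cont : continuous (fun x => enorm (bar m0 (rv_map x)) ^+ 2).
  apply: continuous_enorm2 => i.
  rewrite (_ : (fun x => _) = fun x => (mass m0)^-1 * wsum m0 (fun u => rv_map x u 0 i)).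
    apply: continuous_mulr; first exact: cst_continuous.
    apply: continuous_sumr => u; apply: continuous_mulr; first exact: cst_continuous.
    exact: continuous_rv_map.
  by apply/funext => x; rewrite barE.
have [phi0 adm0] := admissible_exists.
have A0 : ([set x | admissible E m0 d (rv_map x)] !=set0)%classic.
  by exists (map_rv phi0); rewrite /= map_rvK.
have [xs adm_xs xs_min] := rV_argmin A0 admissible_closed admissible_bounded J_cont.
exists (rv_map xs); first exact: adm_xs.
apply: inf_attained; first by exists (rv_map xs).
by move=> _ [psi [adm_psi ->]]; rewrite -(map_rvK psi); apply: xs_min; rewrite /= map_rvK.
Qed.

End Delta.

Theorem proposition1p5 (R : realType) (V : finType) (E : {set {set V}})
  (m0 : V -> R) (d m1 : {set V} -> R) :
  (0 < #|V|)%N ->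
  simple_edges E ->
  connected_graph E ->
  (forall u, 0 < m0 u) ->
  (forall e, e \in E -> 0 < d e) ->
  (forall e, e \in E -> 0 <= m1 e) ->
  support_connected E m1 ->
  \sum_(e in E) m1 e * d e ^+ 2 = Dsq E d ->
  1 - (Dsq E d / mass m0) / lambda1 E m0 m1 <= delta E m0 d /\
  (delta E m0 d = 1 - (Dsq E d / mass m0) / lambda1 E m0 m1 <->
   exists phi : V -> 'rV[R]_#|V|,
     admissible E m0 d phi /\
     (forall u v, [set u; v] \in E ->
        m1 [set u; v] * (d [set u; v] ^+ 2 - enorm (phi u - phi v) ^+ 2) = 0) /\
     (forall (i : 'I_#|V|) (u : V),
        lap E m0 m1 (fun w => phi w 0 i) u
        = lambda1 E m0 m1 * (phi u 0 i - bar m0 phi 0 i))).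
Proof.
(* [connected_graph E] is implied by [support_connected E m1]. *)
move=> V_gt0 simpleE _ m0_gt0 d_gt0 m1_ge0 supp hD; rewrite -hD.
have bound phi := @bar_bound_lambda1 R V E m0 d m1 m0_gt0 m1_ge0 simpleE phi V_gt0 supp.
have lb_delta : delta_bound E m0 d m1 (lambda1 E m0 m1) <= delta E m0 d.
  apply: delta_ge (admissible_exists m0 d_gt0 V_gt0) _ => phi adm.
  exact: (proj1 (bound phi adm)).
split=> //; split=> [delta_eq | [phi [adm eq_cond]]].
  have [phi adm delta_phi] := delta_attained m0_gt0 d_gt0 V_gt0.
  by exists phi; split=> //; apply/(proj2 (bound phi adm)); rewrite -delta_phi.
apply/le_anti; rewrite lb_delta andbT.
apply: le_trans (delta_le adm) _.
by rewrite ((proj2 (bound phi adm)).2 eq_cond).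
Qed.
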